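(* Let $n=p'q$ where $p',q$ are distinct primes both at least $7$, and let $A=L(n;p')$. Then $D_A(n)=4$.
   Context: $\mathbb{Z}_n$ is the integers mod $n$, $U(n)$ its unit group. For nonempty $A\subseteq\mathbb{Z}_n\setminus\{0\}$, a sequence $(x_1,\ldots,x_k)$ is an $A$-weighted zero-sum sequence if $\sum a_ix_i=0$ for some $a_i\in A$; $D_A(n)$ is the least $k$ such that every length-$k$ sequence in $\mathbb{Z}_n$ has a nonempty $A$-weighted zero-sum subsequence. For odd $n=\prod p_i^{r_i}$, a prime $p\mid n$ and $a\in U(n)$, $\left(\frac{a}{p}\right)$ is the Legendre symbol of the image of $a$ in $\mathbb{Z}_p$ and $\left(\frac{a}{n}\right)=\prod\left(\frac{a}{p_i}\right)^{r_i}$. For a prime divisor $p'$ of $n$, $L(n;p')=\{a\in U(n): \left(\frac{a}{n}\right)=\left(\frac{a}{p'}\right)\}$. *)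

(* Z_n is represented by 'I_n (residues 0..n-1), arithmetic mod n. *)
From mathcomp Require Import all_boot all_order all_algebra.
Set Implicit Arguments. Unset Strict Implicit. Unset Printing Implicit Defensive.
Import GRing.Theory.
Local Open Scope ring_scope.

Definition is_sq_mod (p a : nat) : bool :=
  [exists x : 'I_p, (x * x %% p == a %% p)%N].

Definition legendre (p a : nat) : int :=
  if (p %| a)%N then 0 else if is_sq_mod p a then 1 else -1.

Definition jacobi (n a : nat) : int :=
  \prod_(p <- primes n) (legendre p a) ^+ (logn p n).

Definition unitZn (n : nat) (a : 'I_n) : bool := coprime a n.

Definition Lset (n p' : nat) : pred 'I_n :=
  fun a => unitZn a && (jacobi n a == legendre p' a).

Definition has_Azs (n : nat) (A : pred 'I_n) (k : nat) (x : 'I_k -> 'I_n) : Prop :=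
  exists (I : {set 'I_k}) (w : 'I_k -> 'I_n),
    I != set0 /\ (forall i, i \in I -> A (w i)) /\
    ((\sum_(i in I) (w i : nat) * (x i : nat)) %% n = 0)%N.

Definition DA_prop (n : nat) (A : pred 'I_n) (k : nat) : Prop :=
  forall x : 'I_k -> 'I_n, has_Azs A x.

Definition DA_is (n : nat) (A : pred 'I_n) (k : nat) : Prop :=
  DA_prop A k /\ forall k', DA_prop A k' -> (k <= k')%N.

Arguments Lset : clear implicits.
Arguments DA_is : clear implicits.
Arguments DA_prop : clear implicits.

(* By the Chinese remainder theorem Z_pq = F_p x F_q, and (a/pq) = (a/p)(a/q),
   so L(pq; p) corresponds to the pairs (u, v) with u <> 0 and v a nonzero
   square mod q.  A weighted zero-sum on an index set I thus splits into two
   independent problems: cancel the residues mod p with nonzero weights, which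
   is possible iff the number of nonzero ones in I is not 1, and cancel the
   residues mod q with nonzero square weights, which is possible when that
   number is 0 or at least 3, because for q >= 7 every nonzero element is
   a x^2 + b y^2 with x, y <> 0 as soon as a, b <> 0.  Among any four terms some
   I meets both conditions, while (1, p, -pz) with z a nonsquare mod q admits
   none. *)

From mathcomp Require Import all_boot all_order all_algebra.
From mathcomp Require Import ring zify.
Set Implicit Arguments. Unset Strict Implicit. Unset Printing Implicit Defensive.
Import GRing.Theory.
Local Open Scope ring_scope.

Section Squares.
Variable F : finFieldType.
Implicit Types x y z : F.

Definition is_sqr x : bool := [exists y, x == y ^+ 2].

Lemma is_sqrP x : reflect (exists y, x = y ^+ 2) (is_sqr x).
Proof. by apply: (iffP existsP) => [[y /eqP ->]|[y ->]]; exists y. Qed.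

Lemma is_sqr_sqr x : is_sqr (x ^+ 2).
Proof. by apply/is_sqrP; exists x. Qed.

Lemma is_sqr0 : is_sqr 0.
Proof. by apply/is_sqrP; exists 0; rewrite expr0n. Qed.

Lemma is_sqr1 : is_sqr 1.
Proof. by apply/is_sqrP; exists 1; rewrite expr1n. Qed.

Lemma is_sqrM x y : is_sqr x -> is_sqr y -> is_sqr (x * y).
Proof. by move=> /is_sqrP[a ->] /is_sqrP[b ->]; rewrite -exprMn is_sqr_sqr. Qed.

Lemma is_sqrVE x : is_sqr x^-1 = is_sqr x.
Proof.
suff sqrV y : is_sqr y -> is_sqr y^-1 by apply/idP/idP => /sqrV; rewrite ?invrK.
by move=> /is_sqrP[a ->]; rewrite -exprVn is_sqr_sqr.
Qed.

(* The sign bit tells x from -x, so x |-> (x^2, bit) is injective: squaring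
   is at most two-to-one. *)
Lemma card_nonsqr_le :
  (#|[set x | ~~ is_sqr x]| <= #|[set x | (x != 0%R) && is_sqr x]|)%N.
Proof.
set Q := [set x | _ && _]; set N := [set x | _].
pose f x := (x ^+ 2, (enum_rank x < enum_rank (- x))%N).
have f_inj : injective f.
  move=> x y [xy2 +]; have /orP[/eqP // | /eqP ->] : (x == y) || (x == - y).
    by rewrite -eqf_sqr xy2.
  by rewrite /= opprK; case: ltngtP => [_|_|/val_inj/enum_rank_inj ->].
have Q_N : #|[set x : F | x != 0]| = (#|Q| + #|N|)%N.
  rewrite -(cardsID [set x | is_sqr x]); congr addn; apply: eq_card => x.
    by rewrite !inE.
  by rewrite !inE andbC; case: eqP => // ->; rewrite is_sqr0.
have : f @: [set x : F | x != 0] \subset setX Q [set: bool].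
  apply/subsetP => _ /imsetP[x + ->]; rewrite inE => x0.
  by rewrite !inE sqrf_eq0 x0 is_sqr_sqr.
move/subset_leq_card; rewrite card_imset // cardsX cardsT card_bool Q_N.
by rewrite muln2 -addnn leq_add2l.
Qed.

Lemma is_sqrM_nonsqr x y : ~~ is_sqr x -> ~~ is_sqr y -> is_sqr (x * y).
Proof.
move=> xN yN; have x0 : x != 0 by apply: contraNneq xN => ->; apply: is_sqr0.
set Q := [set s | (s != 0) && is_sqr s]; set N := [set s | ~~ is_sqr s].
have xQ_N : [set x * s | s in Q] \subset N.
  apply/subsetP => _ /imsetP[s + ->]; rewrite !inE => /andP[s0 sQ].
  by apply: contra xN => xsQ; rewrite -(mulfK s0 x) is_sqrM ?is_sqrVE.
have {}xQ_N : [set x * s | s in Q] = N.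
  apply/eqP; rewrite eqEcard xQ_N card_imset; last exact: mulfI.
  exact: card_nonsqr_le.
have : y \in N by rewrite inE.
rewrite -xQ_N => /imsetP[s + ->]; rewrite inE => /andP[_ sQ].
by rewrite mulrA -expr2 is_sqrM ?is_sqr_sqr.
Qed.

Lemma is_sqrM_eq x y : x != 0 -> y != 0 -> is_sqr (x * y) = (is_sqr x == is_sqr y).
Proof.
move=> x0 y0; case xQ: (is_sqr x); case yQ: (is_sqr y) => /=.
- exact: is_sqrM.
- by apply: contraFF yQ => xyQ; rewrite -(mulKf x0 y) is_sqrM ?is_sqrVE.
- by apply: contraFF xQ => xyQ; rewrite -(mulfK y0 x) is_sqrM ?is_sqrVE.
- by rewrite is_sqrM_nonsqr ?xQ ?yQ.
Qed.

Lemma exists_nonsqr : (2%:R : F) != 0 -> exists z, ~~ is_sqr z.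
Proof.
move=> two0; apply/existsP; apply: contraNT two0 => /existsPn allQ.
pose rt z := odflt 0 [pick y | z == y ^+ 2].
have rtK : cancel rt (fun y => y ^+ 2).
  move=> z; rewrite /rt; case: pickP => [y /eqP -> // | noroot].
  by have /negPn/is_sqrP[y zy] := allQ z; have := noroot y; rewrite zy eqxx.
have [[a a1] [b b1]] : (exists a, 1 = rt a) /\ (exists b, -1 = rt b).
  by split; apply/codomP; apply: injF_onto (can_inj rtK) _.
have ea : a = 1 by rewrite -(rtK a) -a1 expr1n.
have eb : b = 1 by rewrite -(rtK b) -b1 sqrrN expr1n.
have : 1 = - 1 :> F by rewrite {1}a1 b1 ea eb.
by move/eqP; rewrite -subr_eq0 opprK.
Qed.
End Squares.

Section BinaryForm.
Variable F : finFieldType.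
Implicit Types e d s : F.

Definition represented e d : Prop :=
  exists x y, [/\ x != 0, y != 0 & d = x ^+ 2 + e * y ^+ 2].

Lemma represented_scale e d s :
  s != 0 -> represented e d -> represented e (s ^+ 2 * d).
Proof.
move=> s0 [x [y [x0 y0 ->]]]; exists (s * x), (s * y).
by rewrite !mulf_neq0 //; split => //; ring.
Qed.

Lemma represented_mull e d : e != 0 -> represented e d -> represented e (e * d).
Proof.
move=> e0 [x [y [x0 y0 ->]]]; exists (e * y), x.
by rewrite mulf_neq0 //; split => //; ring.
Qed.

(* d = (d / d') d' with d / d' a nonzero square. *)
Lemma represented_sqr_class e d d' : d != 0 -> d' != 0 ->
  is_sqr d = is_sqr d' -> represented e d' -> represented e d.
Proof.
move=> d0 d'0 dd'; have : is_sqr (d / d') by rewrite is_sqrM_eq ?invr_eq0 // is_sqrVE dd'.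
case/is_sqrP => s ds; have s0 : s != 0 by rewrite -sqrf_eq0 -ds mulf_neq0 ?invr_eq0.
by move/(represented_scale s0); rewrite -ds divfK.
Qed.
End BinaryForm.

Section WeightedZeroSums.
Variables (F : fieldType) (T : finType).
Implicit Types (J R L : {set T}) (b w : T -> F).

Definition nz_support J b := [set j in J | b j != 0].

Lemma sum_nz_support J b w :
  \sum_(j in J) w j * b j = \sum_(j in nz_support J b) w j * b j.
Proof.
rewrite big_set /= [RHS]big_mkcondr; apply: eq_bigr => j _.
by case: eqP => // ->; rewrite mulr0.
Qed.

Variable W : pred F.
Hypothesis W1 : 1 \in W.

Lemma weighted_zero_sum_trivial J b : nz_support J b = set0 ->
  exists2 w, (forall i, w i \in W) & \sum_(j in J) w j * b j = 0.
Proof. by move=> K0; exists (fun=> 1) => //; rewrite sum_nz_support K0 big_set0. Qed.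

Lemma weighted_sum_neq0 c R b : c \in W -> c != 1 -> R != set0 ->
  {in R, forall i, b i != 0} ->
  exists2 w, (forall i, w i \in W) & \sum_(i in R) w i * b i != 0.
Proof.
move=> Wc c1 /set0Pn[j jR] b0; rewrite -(subr_eq0 c) in c1.
pose S := \sum_(i in R :\ j) b i.
have sum_w t : \sum_(i in R) (if i == j then t else 1) * b i = t * b j + S.
  rewrite (big_setD1 j jR) eqxx; congr (_ + _); apply: eq_bigr => i.
  by rewrite !inE => /andP[/negbTE -> _]; rewrite mul1r.
pose t := if b j + S == 0 then c else 1.
exists (fun i => if i == j then t else 1) => [i|].
  by case: (i == j); rewrite // /t; case: ifP.
rewrite sum_w /t; have [Sb0 | ] := eqVneq (b j + S) 0; last by rewrite mul1r.
have -> : S = - b j by apply/eqP; rewrite -addr_eq0 addrC Sb0.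
by rewrite -[X in _ - X]mul1r -mulrBl mulf_neq0 ?b0.
Qed.

(* Weights off L make the rest of the sum nonzero; L then absorbs its opposite. *)
Lemma weighted_zero_sum c J L b : c \in W -> c != 1 -> L \proper nz_support J b ->
  (forall d, d != 0 ->
     exists2 w, (forall i, w i \in W) & \sum_(i in L) w i * b i = d) ->
  exists2 w, (forall i, w i \in W) & \sum_(j in J) w j * b j = 0.
Proof.
set K := nz_support J b => Wc c1 /andP[LK KL] L_rep.
have b0 : {in K :\: L, forall i, b i != 0} by move=> i; rewrite !inE => /and3P[].
have R0 : K :\: L != set0 by rewrite setD_eq0.
have [wR WwR sR0] := weighted_sum_neq0 Wc c1 R0 b0.
set SR := \sum_(i in K :\: L) _ in sR0.
have /L_rep[wL WwL sL] : - SR != 0 by rewrite oppr_eq0.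
exists (fun i => if i \in L then wL i else wR i) => [i|]; first by case: ifP.
rewrite sum_nz_support -/K (big_setID L) /= (setIidPr LK) -[RHS](addNr SR).
congr (_ + _); first by rewrite -sL; apply: eq_bigr => i ->.
by apply: eq_bigr => i; rewrite inE => /andP[/negbTE ->].
Qed.
End WeightedZeroSums.

Lemma unit_weighted_zero_sum (F : fieldType) (T : finType) (J : {set T}) (b : T -> F) :
  (2%:R : F) != 0 -> #|nz_support J b| != 1%N ->
  exists2 w : T -> F, (forall i, w i != 0) & \sum_(j in J) w j * b j = 0.
Proof.
set K := nz_support J b => two0 K1; pose W : pred F := fun x => x != 0.
have W1 : 1 \in W := oner_neq0 F.
suff [w Ww sw0] : exists2 w, (forall i, w i \in W) & \sum_(j in J) w j * b j = 0.
  by exists w.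
have [K0 | [j jK]] := set_0Vmem K; first by apply: weighted_zero_sum_trivial.
apply: (weighted_zero_sum W1 (c := 2%:R) (L := [set j])) => //.
- by rewrite -subr_eq0 mulr2n addrK oner_neq0.
- rewrite properEcard sub1set jK cards1 ltn_neqAle eq_sym K1.
  by apply/card_gt0P; exists j.
- move=> d d0; exists (fun=> d / b j) => [i|].
    by rewrite unfold_in /W mulf_neq0 ?invr_eq0; move: jK; rewrite inE => /andP[].
  by rewrite big_set1 divfK //; move: jK; rewrite inE => /andP[].
Qed.

Section PrimeField.
Variable p : nat.
Hypothesis p_pr : prime p.

Lemma natr_Fp_eq0 k : ((k%:R : 'F_p) == 0) = (p %| k)%N.
Proof. by rewrite (dvdn_pcharf (pchar_Fp p_pr)). Qed.

Lemma natr_Fp_neq0 k : (0 < k < p)%N -> (k%:R : 'F_p) != 0.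
Proof.
case/andP=> k0 kp; rewrite natr_Fp_eq0; apply/negP => /(dvdn_leq k0).
by rewrite leqNgt kp.
Qed.

Lemma natr_Fp_val (x : 'F_p) : (x : nat)%:R = x.
Proof. exact: natr_Zp. Qed.

Lemma is_sq_modE w : is_sq_mod p w = is_sqr (w%:R : 'F_p).
Proof.
apply/existsP/is_sqrP => [[x /eqP xw] | [y yw]].
  by exists (x : nat)%:R; rewrite -Fp_nat_mod // -xw Fp_nat_mod // natrM expr2.
have y_lt : ((y : nat) < p)%N by have := ltn_ord y; move: (y : nat) => k; rewrite Fp_cast.
by exists (Ordinal y_lt); rewrite /= -!val_Fp_nat // natrM natr_Fp_val yw expr2.
Qed.

Section LargePrime.
Hypothesis p_ge7 : (7 <= p)%N.

Let natr_small k : (0 < k < 7)%N -> (k%:R : 'F_p) != 0.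
Proof. by case/andP=> k0 k7; rewrite natr_Fp_neq0 // k0 (leq_trans k7). Qed.

(* Walk up 0, 1, 2, ... to a nonsquare: every element of 'F_p is some k%:R. *)
Lemma exists_sqr_succ_nonsqr :
  exists k : nat, is_sqr (k%:R : 'F_p) && ~~ is_sqr (k.+1%:R : 'F_p).
Proof.
have [z zN] := exists_nonsqr (natr_small (k := 2) isT).
suff sqr_step m : ~~ is_sqr (m%:R : 'F_p) ->
    exists k, is_sqr (k%:R : 'F_p) && ~~ is_sqr (k.+1%:R : 'F_p).
  by apply: (sqr_step z); rewrite natr_Fp_val.
elim: m => [|m IHm] mN; first by rewrite is_sqr0 in mN.
by have [mQ | /IHm //] := boolP (is_sqr (m%:R : 'F_p)); exists m; rewrite mQ.
Qed.

(* If e = f^2: 3^2 + e (4/f)^2 = 5^2, and k + 1 = t^2 + e (1/f)^2 for a square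
   k = t^2 followed by a nonsquare.  Otherwise z and e z lie in opposite classes,
   where z = 1 + e, or z = 1 + 4e = -3 when e = -1. *)
Lemma represented_sqr_classes (e : 'F_p) (b : bool) : e != 0 ->
  exists d, [/\ represented e d, d != 0 & is_sqr d = b].
Proof.
move=> e0; have [/is_sqrP[f ef] | eN] := boolP (is_sqr e).
  have f0 : f != 0 by rewrite -sqrf_eq0 -ef.
  case: b.
    exists (5%:R ^+ 2); rewrite sqrf_eq0 natr_small // is_sqr_sqr; split => //.
    exists 3%:R, (4%:R / f); rewrite natr_small // mulf_neq0 ?invr_eq0 ?natr_small //.
    by split => //; rewrite ef; field.
  have [k /andP[/is_sqrP[t kt] k1N]] := exists_sqr_succ_nonsqr.
  have t0 : t != 0.
    by apply: contraNneq k1N => t0; rewrite -addn1 natrD kt t0 expr0n add0r is_sqr1.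
  exists k.+1%:R; rewrite (negbTE k1N); split => //.
    exists t, f^-1; rewrite invr_eq0; split => //.
    by rewrite -addn1 natrD kt ef; field.
  by apply: contraNneq k1N => ->; apply: is_sqr0.
have [z zR z0] : exists2 z, represented e z & z != 0.
  have [e_m1 | e_nm1] := eqVneq (1 + e) 0.
    exists (1 + e * 2%:R ^+ 2).
      by exists 1, 2%:R; rewrite oner_neq0 natr_small // expr1n.
    have -> : 1 + e * 2%:R ^+ 2 = - 3%:R by rewrite -(subr0 e) -e_m1; ring.
    by rewrite oppr_eq0 natr_small.
  by exists (1 + e) => //; exists 1, 1; rewrite oner_neq0 expr1n mulr1.
have ezQ : is_sqr (e * z) = ~~ is_sqr z by rewrite is_sqrM_eq // (negbTE eN).
have [zb | zNb] := eqVneq (is_sqr z) b; first by exists z.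
exists (e * z); split; [exact: represented_mull | by rewrite mulf_neq0 | ].
by rewrite ezQ; move: zNb; case: (is_sqr z); case: b.
Qed.

Lemma represented_Fp (e d : 'F_p) : e != 0 -> d != 0 -> represented e d.
Proof.
move=> e0 d0; have [d' [d'R d'0 d'd]] := represented_sqr_classes (is_sqr d) e0.
exact: represented_sqr_class d0 d'0 (esym d'd) d'R.
Qed.

Lemma sum_two_sqr_Fp (a b d : 'F_p) : a != 0 -> b != 0 -> d != 0 ->
  exists x y, [/\ x != 0, y != 0 & x ^+ 2 * a + y ^+ 2 * b = d].
Proof.
move=> a0 b0 d0; have a'0 : a^-1 != 0 by rewrite invr_eq0.
have [x [y [x0 y0 dxy]]] := represented_Fp (mulf_neq0 b0 a'0) (mulf_neq0 d0 a'0).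
by exists x, y; split => //; rewrite -(divfK a0 d) dxy; field.
Qed.

Lemma sqr_weighted_zero_sum (T : finType) (J : {set T}) (b : T -> 'F_p) :
  ((#|nz_support J b| == 0) || (2 < #|nz_support J b|))%N ->
  exists2 w : T -> 'F_p,
    forall i, (w i != 0) && is_sqr (w i) & \sum_(j in J) w j * b j = 0.
Proof.
set K := nz_support J b => K03; pose W : pred 'F_p := fun x => (x != 0) && is_sqr x.
have W1 : 1 \in W by rewrite unfold_in /W oner_neq0 is_sqr1.
suff [w Ww sw0] : exists2 w, (forall i, w i \in W) & \sum_(j in J) w j * b j = 0.
  by exists w.
case/orP: K03 => [/eqP/cards0_eq K0 | /card_gt2P[j0 [j1 [j2 [[j0K j1K j2K] jj]]]]].
  by apply: weighted_zero_sum_trivial.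
have [j01 j12 j20] := jj.
have bK j : j \in K -> b j != 0 by rewrite inE => /andP[].
apply: (weighted_zero_sum W1 (c := 2%:R ^+ 2) (L := [set j0; j1])) => //.
- by rewrite unfold_in /W sqrf_eq0 natr_small // is_sqr_sqr.
- by rewrite -subr_eq0 (_ : 2%:R ^+ 2 - 1 = 3%:R) ?natr_small //; ring.
- apply/properP; split; first by rewrite subUset !sub1set j0K j1K.
  by exists j2; rewrite // !inE negb_or j20 eq_sym j12.
move=> d d0; have [x [y [x0 y0 xyd]]] := sum_two_sqr_Fp (bK _ j0K) (bK _ j1K) d0.
exists (fun i => if i == j0 then x ^+ 2 else y ^+ 2) => [i|].
  by rewrite unfold_in /W; case: (i == j0); rewrite sqrf_eq0 is_sqr_sqr ?x0 ?y0.
by rewrite big_setU1 /= ?inE // big_set1 eqxx eq_sym (negbTE j01).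
Qed.
End LargePrime.
End PrimeField.

Section TwoPrimes.
Variables p q : nat.
Hypotheses (p_pr : prime p) (q_pr : prime q) (p_neq_q : p != q).

Let pq_coprime : coprime p q.
Proof. by rewrite prime_coprime // dvdn_prime2. Qed.

Lemma prime_muln_gt0 : (0 < p * q)%N.
Proof. by rewrite muln_gt0 !prime_gt0. Qed.

Definition crt (a : 'F_p) (b : 'F_q) : 'I_(p * q) :=
  Ordinal (ltn_pmod (chinese p q a b) prime_muln_gt0).

Lemma crt_Fpl a b : ((crt a b : nat)%:R : 'F_p) = a.
Proof.
rewrite -Fp_nat_mod //= modn_dvdm ?dvdn_mulr // chinese_modl //.
by rewrite Fp_nat_mod // natr_Fp_val.
Qed.

Lemma crt_Fpr a b : ((crt a b : nat)%:R : 'F_q) = b.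
Proof.
rewrite -Fp_nat_mod //= modn_dvdm ?dvdn_mull // chinese_modr //.
by rewrite Fp_nat_mod // natr_Fp_val.
Qed.

Lemma modpq_eq0 S :
  (S %% (p * q) == 0)%N = ((S%:R : 'F_p) == 0) && ((S%:R : 'F_q) == 0).
Proof. by rewrite !natr_Fp_eq0 // -Gauss_dvd. Qed.

Lemma jacobi_pq w : jacobi (p * q) w = legendre p w * legendre q w.
Proof.
have primes_pq : perm_eq (primes (p * q)) [:: p; q].
  apply: uniq_perm; rewrite ?primes_uniq //= ?inE ?p_neq_q // => r.
  rewrite mem_primes !inE prime_muln_gt0 /=.
  apply/andP/orP => [[r_pr] | [] /eqP ->].
  - by rewrite Euclid_dvdM // !dvdn_prime2 // => /orP.
  - by rewrite p_pr dvdn_mulr.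
  - by rewrite q_pr dvdn_mull.
rewrite /jacobi (perm_big _ primes_pq) !big_cons big_nil /= mulr1.
rewrite !lognM ?prime_gt0 // !logn_prime // !eqxx (negbTE p_neq_q).
by rewrite eq_sym (negbTE p_neq_q) !expr1.
Qed.

Lemma Lset_pqE (w : 'I_(p * q)) : Lset (p * q) p w =
  [&& (w%:R : 'F_p) != 0, (w%:R : 'F_q) != 0 & is_sqr (w%:R : 'F_q)].
Proof.
rewrite /Lset /unitZn jacobi_pq coprimeMr !(coprime_sym w) !prime_coprime //.
rewrite !natr_Fp_eq0 // -is_sq_modE // /legendre.
by case: (p %| w)%N; case: (q %| w)%N; case: (is_sq_mod p w); case: (is_sq_mod q w).
Qed.

Lemma has_Azs_LsetP k (x : 'I_k -> 'I_(p * q)) :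
  has_Azs (Lset (p * q) p) x <->
  exists (I : {set 'I_k}) (u : 'I_k -> 'F_p) (v : 'I_k -> 'F_q),
    [/\ I != set0, {in I, forall i, [&& u i != 0, v i != 0 & is_sqr (v i)]},
        \sum_(i in I) u i * (x i)%:R = 0 & \sum_(i in I) v i * (x i)%:R = 0].
Proof.
split=> [[I [w [I0 [wA /eqP]]]] | [I [u [v [I0 uvW su sv]]]]].
  rewrite modpq_eq0 !natr_sum => /andP[/eqP sp /eqP sq].
  exists I, (fun i => (w i)%:R), (fun i => (w i)%:R); split => //.
  - by move=> i /wA; rewrite Lset_pqE.
  - by rewrite -[RHS]sp; apply: eq_bigr => i _; rewrite natrM.
  - by rewrite -[RHS]sq; apply: eq_bigr => i _; rewrite natrM.
exists I, (fun i => crt (u i) (v i)); do 2!split => //.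
  by move=> i /uvW; rewrite Lset_pqE crt_Fpl crt_Fpr.
apply/eqP; rewrite modpq_eq0 !natr_sum; apply/andP; split; apply/eqP.
  by rewrite -[RHS]su; apply: eq_bigr => i _; rewrite natrM crt_Fpl.
by rewrite -[RHS]sv; apply: eq_bigr => i _; rewrite natrM crt_Fpr.
Qed.
End TwoPrimes.

(* With P, Q the terms vanishing mod p and mod q, I :\: P and I :\: Q count the
   nonzero coefficients of the two component equations. *)
Lemma exists_admissible_subset4 (P Q : {set 'I_4}) :
  exists2 I : {set 'I_4}, I != set0 &
    (#|I :\: P| != 1)%N && ((#|I :\: Q| == 0) || (2 < #|I :\: Q|))%N.
Proof.
have [PQ0 | [i]] := set_0Vmem (P :&: Q); last first.
  rewrite inE => /andP[iP iQ]; exists [set i].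
    by apply/set0Pn; exists i; rewrite inE.
  have card_i (A : {set _}) : i \in A -> #|[set i] :\: A| = 0%N.
    by move=> iA; apply/eqP; rewrite cards_eq0 setD_eq0 sub1set.
  by rewrite !card_i.
have [/card_gt1P[i [j [iQP jQP ij]]] | QP_le1] := boolP (1 < #|Q :\: P|)%N.
  exists [set i; j]; first by apply/set0Pn; exists i; rewrite !inE eqxx.
  move: iQP jQP; rewrite !inE => /andP[iP iQ] /andP[jP jQ].
  have -> : [set i; j] :\: P = [set i; j].
    by apply/setDidPl; rewrite disjoints_subset subUset !sub1set !inE iP jP.
  have -> : [set i; j] :\: Q = set0 by apply/eqP; rewrite setD_eq0 subUset !sub1set iQ jQ.
  by rewrite cards2 ij cards0.
have setDidI0 (A B : {set 'I_4}) : A :&: B = set0 -> A :\: B = A.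
  by move=> AB0; apply/setDidPl; rewrite -setI_eq0 AB0.
have [P3 | P3] := eqVneq #|P| 3%N.
  exists P; first by apply: contra_eqN P3 => /eqP ->; rewrite cards0.
  by rewrite setDv cards0 setDidI0 // P3.
exists setT; first by apply/set0Pn; exists ord0; rewrite inE.
rewrite (setDidI0 Q P) 1?setIC // in QP_le1.
by rewrite !setTD; have := cardsC P; have := cardsC Q; rewrite card_ord; lia.
Qed.

Lemma DA_prop_monotone n (A : pred 'I_n) k k' :
  (k <= k')%N -> DA_prop n A k -> DA_prop n A k'.
Proof.
move=> le_kk' DAk x; have [I [w [I0 [wA sw]]]] := DAk (x \o widen_ord le_kk').
have [i0 i0I] := set0Pn _ I0.
exists (widen_ord le_kk' @: I), (fun j => w (insubd i0 j)).
have widenK i : insubd i0 (widen_ord le_kk' i : nat) = i.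
  by apply: val_inj; rewrite /= valKd.
have widen_inj : injective (widen_ord le_kk') by move=> i j [] /val_inj.
split; first by apply/set0Pn; exists (widen_ord le_kk' i0); apply: imset_f.
split; first by move=> _ /imsetP[i iI ->]; rewrite widenK wA.
rewrite big_imset /=; last by move=> i j _ _ /widen_inj.
by rewrite -[RHS]sw; congr (_ %% _)%N; apply: eq_bigr => i _; rewrite widenK.
Qed.

Section Bounds.
Variables p q : nat.
Hypotheses (p_pr : prime p) (q_pr : prime q) (p_neq_q : p != q).
Hypotheses (p_ge7 : (7 <= p)%N) (q_ge7 : (7 <= q)%N).

Lemma DA4_Lset : DA_prop (p * q) (Lset (p * q) p) 4.
Proof.
move=> x; apply/(has_Azs_LsetP p_pr q_pr p_neq_q).
pose a i : 'F_p := (x i)%:R; pose b i : 'F_q := (x i)%:R.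
have [I I0 /andP[aI bI]] :=
  exists_admissible_subset4 [set i | a i == 0] [set i | b i == 0].
have nz_supportE (F : fieldType) (c : 'I_4 -> F) :
    I :\: [set i | c i == 0] = nz_support I c.
  by apply/setP => i; rewrite !inE andbC.
rewrite !nz_supportE in aI bI.
have two0 : (2%:R : 'F_p) != 0 by rewrite natr_Fp_neq0 // (leq_trans _ p_ge7).
have [u u0 su] := unit_weighted_zero_sum two0 aI.
have [v vW sv] := sqr_weighted_zero_sum q_pr q_ge7 bI.
by exists I, u, v; split => // i _; rewrite u0 vW.
Qed.

(* In CRT coordinates the terms are (1, 1), (0, 1), (0, -z), z a nonsquare: the
   first can never be used and the other two cancel only if z is a square. *)
Lemma not_DA3_Lset : ~ DA_prop (p * q) (Lset (p * q) p) 3.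
Proof.
have two0 : (2%:R : 'F_q) != 0 by rewrite natr_Fp_neq0 // (leq_trans _ q_ge7).
have [z zN] := exists_nonsqr two0.
pose x (i : 'I_3) := crt p_pr q_pr (i == ord0)%:R [:: 1; 1; - z]`_i.
move=> /(_ x)/(has_Azs_LsetP p_pr q_pr p_neq_q)[I [u [v [I0 uvW su sv]]]].
have xp i : ((x i : nat)%:R : 'F_p) = (i == ord0)%:R by rewrite crt_Fpl.
have xq i : ((x i : nat)%:R : 'F_q) = [:: 1; 1; - z]`_i by rewrite crt_Fpr.
have {}su : \sum_(i in I) u i * (i == ord0)%:R = 0.
  by rewrite -[RHS]su; apply: eq_bigr => i _; rewrite xp.
have {}sv : \sum_(i in I) v i * [:: 1; 1; - z]`_i = 0.
  by rewrite -[RHS]sv; apply: eq_bigr => i _; rewrite xq.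
have ord0_notin : ord0 \notin I.
  apply/negP => i0I; case/and3P: (uvW _ i0I) => /negP u0 _ _; apply/u0/eqP.
  rewrite -[RHS]su (bigD1 ord0) //= mulr1 big1 ?addr0 // => i /andP[_ /negbTE ->].
  by rewrite mulr0.
have z0 : z != 0 by apply: contraNneq zN => ->; apply: is_sqr0.
have vW i : i \in I -> v i != 0 /\ is_sqr (v i) by move/uvW/and3P=> [].
rewrite big_mkcond !big_ord_recl big_ord0 /= (negbTE ord0_notin) in sv.
set i2 := lift ord0 (lift ord0 ord0) in sv; set i1 := lift ord0 ord0 in sv.
move: sv; case: ifP => [i1I | i1N]; case: ifP => [i2I | i2N];
  rewrite ?add0r ?addr0 ?mulr1 => sv.
- have [[v1_0 v1Q] [v2_0 v2Q]] := (vW _ i1I, vW _ i2I).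
  move/eqP: sv; rewrite mulrN subr_eq0 => /eqP v1E.
  by move: zN; rewrite -(mulKf v2_0 z) -v1E mulrC is_sqrM ?is_sqrVE.
- by case: (vW _ i1I); rewrite sv eqxx.
- have [v2_0 _] := vW _ i2I.
  by move/eqP: sv; rewrite mulf_eq0 oppr_eq0 (negbTE z0) (negbTE v2_0).
case/negP: I0; rewrite -cards_eq0 -sum1_card big_mkcond !big_ord_recl big_ord0 /=.
by rewrite (negbTE ord0_notin) i1N i2N.
Qed.
End Bounds.

Theorem theorem3p8 (p' q : nat) :
  prime p' -> prime q -> p' != q -> (7 <= p')%N -> (7 <= q)%N ->
  DA_is (p' * q)%N (Lset (p' * q)%N p') 4.
Proof.
move=> p_pr q_pr p_neq_q p_ge7 q_ge7; split; first exact: DA4_Lset.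
move=> k DAk; rewrite leqNgt; apply/negP => k_lt4.
exact: not_DA3_Lset (DA_prop_monotone (k_lt4 : (k <= 3)%N) DAk).
Qed.
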